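(* Let $\ell\ge2$ and $V=(\mathbb{F}_2)^{2^\ell}$. If $G<\mathrm{GL}(V)$ is a subgroup isomorphic to $\mathrm{Alt}((\mathbb{F}_2)^{128})$, then $\ell\ge67$.
   Context: $\mathrm{Alt}((\mathbb{F}_2)^{128})$ denotes the alternating group on the set $(\mathbb{F}_2)^{128}$ (of cardinality $2^{128}$). *)

From mathcomp Require Import all_boot all_algebra all_fingroup all_solvable.
Set Implicit Arguments. Unset Strict Implicit. Unset Printing Implicit Defensive.

Definition F2_128 := 'rV['F_2]_128.

(** The 3-adic valuation of #|Alt(X)| with #|X| = 2^128 is at least 2^128/3,
    while by the lifting-the-exponent lemma v_3(2^i - 1) <= v_3(i) + 1, so the
    3-adic valuation of #|GL_n(F_2)| = 2^(n choose 2) * prod_(i <= n) (2^i - 1)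
    is at most n (l + 1) for n = 2^l.  For l <= 66 this is at most 67 * 2^66,
    far less than 2^128/3, so Lagrange's theorem rules out an embedding. *)

From mathcomp Require Import all_boot all_algebra all_fingroup all_solvable.
From mathcomp Require Import zify.

Set Implicit Arguments.
Unset Strict Implicit.
Unset Printing Implicit Defensive.

Lemma logn_prod p I r (P : pred I) (F : I -> nat) :
    (forall i, P i -> 0 < F i) ->
  logn p (\prod_(i <- r | P i) F i) = \sum_(i <- r | P i) logn p (F i).
Proof.
move=> F_gt0; elim: r => [|i r IHr]; first by rewrite !big_nil logn1.
rewrite !big_cons; case: ifP => // Pi.
by rewrite lognM ?IHr ?F_gt0 // prodn_cond_gt0.
Qed.

Lemma logn_leq_exp2 p i k : 0 < i -> i <= 2 ^ k -> logn p i <= k.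
Proof.
move=> i_gt0 le_i_2k; case p_pr: (prime p); last by rewrite /logn p_pr.
rewrite -(@leq_exp2l 2) //; apply: leq_trans le_i_2k.
apply: leq_trans (dvdn_leq i_gt0 (pfactor_dvdnn p i)).
by case: (logn p i) => // e; rewrite leq_exp2r // prime_gt1.
Qed.

Lemma logn3_cube_predn y : y %% 3 = 1 -> 1 < y ->
  logn 3 (y ^ 3).-1 = (logn 3 y.-1).+1.
Proof.
move=> y3 y_gt1; rewrite (divn_eq y 3) y3 in y_gt1 *; set q := y %/ 3.
have sum3 : \sum_(i < 3) (q * 3 + 1) ^ i = 3 * (3 * (q * q + q)).+1.
  by rewrite !big_ord_recr big_ord0 /=; nia.
have logn_sum3 : logn 3 (3 * (3 * (q * q + q)).+1) = 1.
  have coprime3 : coprime 3 (3 * (q * q + q)).+1.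
    by rewrite prime_coprime // -(addn1 (3 * _)) dvdn_addr ?dvdn_mulr.
  by rewrite lognM // (logn_prime _ (isT : prime 3)) (logn_coprime coprime3).
have q_gt0 : 0 < q by lia.
by rewrite predn_exp sum3 addn1 /= lognM ?muln_gt0 ?q_gt0 // logn_sum3 addn1.
Qed.

Lemma logn3_expn_predn x k : x %% 3 = 1 -> 1 < x -> 0 < k ->
  logn 3 (x ^ k).-1 = logn 3 x.-1 + logn 3 k.
Proof.
move=> x3 x_gt1; elim/ltn_ind: k => k IHk k_gt0.
have [/dvdnP[m def_k] | k3] := boolP (3 %| k).
  have m_gt0 : 0 < m by move: k_gt0; rewrite def_k muln_gt0 andbT.
  have xm3 : x ^ m %% 3 = 1 by rewrite -modnXm x3 exp1n.
  have xm_gt1 : 1 < x ^ m by rewrite -(exp1n m) ltn_exp2r.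
  rewrite def_k expnM logn3_cube_predn // IHk ?def_k ?ltn_Pmulr //.
  by rewrite lognM // (pfactorK 1) // addn1 addnS.
have dvd3_sum : (3 %| \sum_(i < k) x ^ i) = (3 %| k).
  rewrite /dvdn -modn_summ (eq_bigr (fun=> 1)) => [|i _]; last first.
    by rewrite -modnXm x3 exp1n.
  by rewrite sum1_card card_ord.
have sum_gt0 : 0 < \sum_(i < k) x ^ i.
  by case: k k_gt0 {IHk k3 dvd3_sum} => // k _; rewrite big_ord_recl expn0.
rewrite predn_exp lognM //; last by rewrite -subn1 subn_gt0.
have coprime3_k : coprime 3 k by rewrite prime_coprime.
have coprime3_sum : coprime 3 (\sum_(i < k) x ^ i) by rewrite prime_coprime ?dvd3_sum.
by rewrite (logn_coprime coprime3_k) (logn_coprime coprime3_sum).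
Qed.

Lemma logn3_pow2_predn i : 0 < i -> logn 3 (2 ^ i).-1 <= (logn 3 i).+1.
Proof.
move=> i_gt0; have -> : (logn 3 i).+1 = logn 3 (4 ^ i).-1.
  by rewrite logn3_expn_predn // (logn_prime _ (isT : prime 3)).
apply: dvdn_leq_log; first by rewrite -subn1 subn_gt0 -(expn0 4) ltn_exp2l.
have -> : 4 ^ i = (2 ^ i) ^ 2 by rewrite -expnM mulnC expnM.
by rewrite [X in _ %| X]predn_exp dvdn_mulr.
Qed.

Lemma logn3_card_GL_F2 n k : 0 < n -> n <= 2 ^ k ->
  logn 3 #|'GL_n(2)%g| <= n * k.+1.
Proof.
move=> n_gt0 le_n_2k; rewrite card_GL // card_Fp // logn_Gauss; last first.
  exact: coprimeXr.
have -> : n * k.+1 = \sum_(1 <= i < n.+1) k.+1 by rewrite sum_nat_const_nat subn1.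
rewrite big_nat_cond [leqRHS]big_nat_cond.
rewrite logn_prod => [|i /andP[/andP[i_gt0 _] _]]; last first.
  by rewrite subn_gt0 -(expn0 2) ltn_exp2l.
apply: leq_sum => i /andP[/andP[i_gt0 le_i_n] _].
rewrite subn1 (leq_trans (logn3_pow2_predn i_gt0)) // ltnS.
exact: logn_leq_exp2 i_gt0 (leq_trans _ le_n_2k).
Qed.

Lemma logn_card_Alt (T : finType) p : prime p -> odd p -> 1 < #|T| ->
  #|T| %/ p <= logn p #|('Alt_T)%g|.
Proof.
move=> p_pr p_odd T_gt1.
rewrite -(logn_Gauss _ (_ : coprime p 2)) ?coprimen2 // card_Alt //.
rewrite logn_fact // big_ltn; last exact: ltnW.
exact: leq_addr.
Qed.

Lemma expn66_mul67_lt : 2 ^ 66 * 67 < 2 ^ 128 %/ 3.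
Proof.
have pow66_gt0 : 0 < 2 ^ 66 by exact: expn_gt0.
rewrite leq_divRL; last by [].
apply: leq_trans (_ : 2 ^ 66 * 68 * 3 <= _).
  by rewrite leq_mul2r ltn_pmul2l.
rewrite -mulnA (_ : 128 = 66 + 62); last by [].
rewrite expnD leq_pmul2l; last exact: pow66_gt0.
by apply: (@leq_trans (2 ^ 8)); last exact: leq_pexp2l.
Qed.

Theorem mainTheorem12 (l : nat) (hl : 2 <= l)
  (G : {group {'GL_(2 ^ l)['F_2]}})
  (hG : G \isog 'Alt_F2_128) :
  67 <= l.
Proof.
rewrite leqNgt; apply/negP => l_le66.
have GL_le : logn 3 #|'GL_(2 ^ l)(2)%g| <= 2 ^ 66 * 67.
  apply: leq_trans (logn3_card_GL_F2 (expn_gt0 2 l) (leqnn _)) _.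
  by rewrite leq_mul // leq_exp2l // -ltnS.
have G_le_GL : logn 3 #|G| <= logn 3 #|'GL_(2 ^ l)(2)%g|.
  by apply: dvdn_leq_log; [exact: cardG_gt0 | exact/cardSg/subsetT].
have card_F2_128 : #|F2_128| = 2 ^ 128 by rewrite card_mx card_Fp.
have F2_128_gt1 : 1 < #|F2_128| by rewrite card_F2_128 -(expn0 2) ltn_exp2l.
have Alt_le_G : 2 ^ 128 %/ 3 <= logn 3 #|G|.
  rewrite (card_isog hG) -card_F2_128.
  exact: (@logn_card_Alt F2_128 3 isT isT F2_128_gt1).
have := leq_ltn_trans (leq_trans Alt_le_G (leq_trans G_le_GL GL_le)).
by move/(_ _ expn66_mul67_lt); rewrite ltnn.
Qed.
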